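(* Let $N, D \ge 1$, let $X \in \mathbb{R}^{N\times D}$ have rows $x_1,\ldots,x_N$, and let $\lambda^2 > 0$, $\rho^2 > 0$. For $\sigma^2 > 0$ set $\gamma = \exp(-\lambda^2/(2\sigma^2))$ and, for a feature allocation $(K^+, Z)$ and feature means $A \in \mathbb{R}^{K^+ \times D}$ (rows $\mu_1,\ldots,\mu_{K^+}$), define $$p(X,Z,A) = \frac{1}{(2\pi\sigma^2)^{ND/2}} \exp\Big\{-\frac{\operatorname{tr}((X-ZA)'(X-ZA))}{2\sigma^2}\Big\} \cdot \frac{\gamma^{K^+}\exp\{-\sum_{n=1}^N \gamma/n\}}{\prod_{h=1}^H \tilde K_h!} \prod_{k=1}^{K^+} S_{N,k}^{-1}\binom{N}{S_{N,k}}^{-1} \cdot \prod_{k=1}^{K^+} \mathcal{N}(\mu_k \mid 0, \rho^2 I_D).$$ Then for fixed $K^+, Z, A$, as $\sigma^2 \to 0$, $$-2\sigma^2 \log p(X,Z,A) \sim \operatorname{tr}\big[(X-ZA)'(X-ZA)\big] + K^+ \lambda^2,$$ and consequently finding the MAP estimate of $(K^+, Z, A)$ is asymptotically equivalent to solving $\operatorname{argmin}_{K^+, Z, A} \operatorname{tr}[(X-ZA)'(X-ZA)] + K^+\lambda^2$.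
   Context: A feature allocation consists of an integer $K^+ \ge 0$ and a binary matrix $Z = (z_{nk}) \in \{0,1\}^{N \times K^+}$ each of whose columns is nonzero (a data index may belong to any number of features, including none). $S_{N,k} = \sum_n z_{nk}$; $H$ is the number of distinct column vectors among the columns of $Z$, and $\tilde K_h$ is the number of columns equal to the $h$-th distinct column. The middle factor is the Indian buffet process probability of $Z$ with mass parameter $\gamma$. $\mathcal{N}(\cdot\mid m,\Sigma)$ is the Gaussian density. $f(\sigma^2)\sim g(\sigma^2)$ means $f(\sigma^2)/g(\sigma^2)\to 1$ as $\sigma^2 \to 0$. *)

From HB Require Import structures.
From mathcomp Require Import all_boot all_order all_algebra.
From mathcomp Require Import all_classical all_reals all_analysis.
Set Implicit Arguments. Unset Strict Implicit. Unset Printing Implicit Defensive.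
Import Order.TTheory GRing.Theory Num.Theory.
Import numFieldNormedType.Exports.
Local Open Scope ring_scope.

Section FA.
Variable R : realType.

Definition feature_allocation (N K : nat) (Z : 'M[bool]_(N, K)) : Prop :=
  forall k : 'I_K, exists n : 'I_N, Z n k = true.

Definition Zreal (N K : nat) (Z : 'M[bool]_(N, K)) : 'M[R]_(N, K) :=
  map_mx (fun b : bool => (b : nat)%:R) Z.

Definition Scount (N K : nat) (Z : 'M[bool]_(N, K)) (k : 'I_K) : nat :=
  (\sum_(n < N) (Z n k : nat))%N.

(* prod_{h=1}^H tilde K_h ! : over the distinct columns of Z,
   the factorial of the multiplicity of each *)
Definition col_mult_fact (N K : nat) (Z : 'M[bool]_(N, K)) : nat :=
  let cols := [seq col k Z | k <- enum 'I_K] in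
  (\prod_(c <- undup cols) (count_mem c cols)`!)%N.

Definition sq_err (N D K : nat) (X : 'M[R]_(N, D)) (Z : 'M[bool]_(N, K))
    (A : 'M[R]_(K, D)) : R :=
  \tr ((X - Zreal Z *m A)^T *m (X - Zreal Z *m A)).

Definition lik (N D K : nat) (s2 : R) (X : 'M[R]_(N, D)) (Z : 'M[bool]_(N, K))
    (A : 'M[R]_(K, D)) : R :=
  (2 * pi * s2) `^ (- ((N * D)%:R / 2)) * expR (- sq_err X Z A / (2 * s2)).

Definition ibp_prob (N K : nat) (gam : R) (Z : 'M[bool]_(N, K)) : R :=
  gam ^+ K * expR (- \sum_(n < N) gam / (n.+1)%:R) / (col_mult_fact Z)%:R
  * \prod_(k < K) ((Scount Z k)%:R^-1 * ('C(N, Scount Z k))%:R^-1).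

Definition gauss0 (D : nat) (rho2 : R) (mu : 'rV[R]_D) : R :=
  (2 * pi * rho2) `^ (- (D%:R / 2))
  * expR (- (\sum_(d < D) mu 0 d ^+ 2) / (2 * rho2)).

Definition joint (N D K : nat) (lam2 rho2 s2 : R) (X : 'M[R]_(N, D))
    (Z : 'M[bool]_(N, K)) (A : 'M[R]_(K, D)) : R :=
  lik s2 X Z A * ibp_prob (expR (- lam2 / (2 * s2))) Z
  * \prod_(k < K) gauss0 rho2 (row k A).

End FA.

(* Taking logarithms, [-2 s ln p] with [s = sigma^2] is the sum of
   [tr((X - ZA)'(X - ZA))] (the Gaussian likelihood), [K^+ lambda^2] (the factor
   [gamma^(K^+)] of the Indian buffet prior, since [ln gamma = -lambda^2 / (2 s)]),
   and of terms vanishing as [s -> 0]: a constant times [s], a constant times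
   [s ln s] coming from the normalisation of the likelihood, and [2 s] times the
   mass [sum_n gamma / n] of the prior, which stays in [[0, N]]. *)

From mathcomp Require Import all_boot all_order all_algebra.
From mathcomp Require Import all_classical all_reals all_analysis.
From mathcomp Require Import ring lra.
Import Order.TTheory GRing.Theory Num.Theory.
Import numFieldNormedType.Exports.

Set Implicit Arguments.
Unset Strict Implicit.
Unset Printing Implicit Defensive.

Local Open Scope classical_set_scope.
Local Open Scope ring_scope.

Section RightLimitsAtZero.
Variable R : realType.

Lemma cvg_at_right0_id : (fun x : R => x) x @[x --> 0^'+] --> (0 : R).
Proof. exact/cvg_at_right_filter/cvg_id. Qed.

Lemma cvg_at_right0_mul_bounded (f : R -> R) (M : R) :
  (\forall x \near 0^'+, 0 <= f x <= M) -> (x * f x) @[x --> (0 : R)^'+] --> (0 : R).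
Proof.
move=> fM; apply: (@squeeze_cvgr _ _ _ _ (fun=> 0) (fun x => x * M)).
- near=> x.
  have x0 : 0 < x by near: x; exact: nbhs_right_gt.
  have /andP[f0 fM'] : 0 <= f x <= M by near: x.
  by rewrite mulr_ge0 ?ler_pM2l // ltW.
- exact: cvg_cst.
- by rewrite -[X in _ --> X](mul0r M); apply: cvgMr_tmp; exact: cvg_at_right0_id.
Unshelve. all: by end_near.
Qed.

Lemma ln_gt_Ninv (y : R) : 0 < y -> - y^-1 < ln y.
Proof.
move=> y0; have := @ln_sublinear _ y^-1; rewrite invr_gt0 y0 lnV ?posrE //.
by rewrite ltrNl; apply.
Qed.

(* Squeeze [x ln x] between [-2 sqrt x] and [0]: with [y = sqrt x],
   [x ln x = 2 y^2 ln y > -2 y]. *)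
Lemma cvg_at_right0_mul_ln : (x * ln x) @[x --> (0 : R)^'+] --> (0 : R).
Proof.
apply: (@squeeze_cvgr _ _ _ _ (fun x => -2 * Num.sqrt x) (fun=> 0)).
- near=> x.
  have x0 : 0 < x by near: x; exact: nbhs_right_gt.
  have x1 : x < 1 by near: x; exact: nbhs_right_lt.
  apply/andP; split; last by rewrite mulr_ge0_le0 ?ln_le0 ?ltW.
  have y0 : 0 < Num.sqrt x by rewrite sqrtr_gt0.
  have {2 3}-> : x = Num.sqrt x ^+ 2 by rewrite sqr_sqrtr // ltW.
  rewrite lnXn //; set y := Num.sqrt x.
  have : y ^+ 2 * (- y^-1) <= y ^+ 2 * ln y.
    by rewrite ler_pM2l ?exprn_gt0 // ltW ?ln_gt_Ninv.
  have -> : y ^+ 2 * (- y^-1) = - y by rewrite expr2 mulrN -mulrA mulfV ?gt_eqF // mulr1.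
  rewrite mulrnAr; lra.
- have /cvg_at_right_filter := @sqrt_continuous R 0; rewrite sqrtr0 => sqrt0.
  by rewrite -[X in _ --> X](mulr0 (-2)); exact: cvgMl_tmp sqrt0.
- exact: cvg_cst.
Unshelve. all: by end_near.
Qed.

End RightLimitsAtZero.

Section IBPFactors.
Variables (R : realType) (N K : nat) (Z : 'M[bool]_(N, K)).

Definition ibp_count_factor : R :=
  \prod_(k < K) ((Scount Z k)%:R^-1 * ('C(N, Scount Z k))%:R^-1).

Lemma Scount_gt0 k : feature_allocation Z -> (0 < Scount Z k)%N.
Proof. by move=> /(_ k)[n Znk]; rewrite /Scount (bigD1 n) //= Znk. Qed.

Lemma Scount_le k : (Scount Z k <= N)%N.
Proof.
rewrite -[leqRHS](card_ord N) -sum1_card.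
by apply: leq_sum => n _; case: (Z n k).
Qed.

Lemma col_mult_fact_gt0 : (0 < col_mult_fact Z)%N.
Proof. by apply: prodn_gt0 => c; exact: fact_gt0. Qed.

Lemma ibp_count_factor_gt0 : feature_allocation Z -> 0 < ibp_count_factor.
Proof.
move=> hZ; apply: prodr_gt0 => k _.
by rewrite mulr_gt0 // invr_gt0 ltr0n ?bin_gt0 ?Scount_le ?Scount_gt0.
Qed.

Lemma harmonic_mass_bounds (gam : R) : 0 <= gam <= 1 ->
  0 <= \sum_(n < N) gam / (n.+1)%:R <= N%:R.
Proof.
move=> /andP[g0 g1]; apply/andP; split.
  by apply: sumr_ge0 => n _; rewrite divr_ge0.
have -> : N%:R = \sum_(n < N) (1 : R) by rewrite sumr_const card_ord.
apply: ler_sum => n _; rewrite ler_pdivrMr ?ltr0n // mul1r.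
by rewrite (le_trans g1) ?ler1n.
Qed.

End IBPFactors.
Arguments ibp_count_factor {R N K} Z.

Lemma gauss0_gt0 (R : realType) (D : nat) (rho2 : R) (mu : 'rV[R]_D) :
  0 < rho2 -> 0 < gauss0 rho2 mu.
Proof. by move=> rho0; rewrite mulr_gt0 ?expR_gt0 ?powR_gt0 ?mulr_gt0 ?pi_gt0. Qed.

Section JointLogDensity.
Variables (R : realType) (N D K : nat) (X : 'M[R]_(N, D)) (Z : 'M[bool]_(N, K)).
Variables (A : 'M[R]_(K, D)) (lam2 rho2 : R).
Hypotheses (hZ : feature_allocation Z) (rho0 : 0 < rho2).

Definition ln_joint_const : R :=
  ln (ibp_count_factor Z) - ln (col_mult_fact Z)%:R
  + ln (\prod_(k < K) gauss0 rho2 (row k A)).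

Lemma ln_joint (s : R) : 0 < s -> ln (joint lam2 rho2 s X Z A) =
  - ((N * D)%:R / 2) * ln (2 * pi * s) - (sq_err X Z A + K%:R * lam2) / (2 * s)
  - \sum_(n < N) expR (- lam2 / (2 * s)) / (n.+1)%:R + ln_joint_const.
Proof.
move=> s0; rewrite /joint /lik /ibp_prob -/(ibp_count_factor Z).
have pis : 0 < 2 * pi * s by rewrite !mulr_gt0 ?pi_gt0.
have cm0 : 0 < (col_mult_fact Z)%:R :> R by rewrite ltr0n col_mult_fact_gt0.
have P0 := ibp_count_factor_gt0 R hZ.
have G0 : 0 < \prod_(k < K) gauss0 rho2 (row k A).
  by apply: prodr_gt0 => k _; exact: gauss0_gt0.
rewrite !lnM ?posrE ?mulr_gt0 ?powR_gt0 ?expR_gt0 ?exprn_gt0 ?invr_gt0 //.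
- rewrite ln_powR !lnM ?posrE ?mulr_gt0 ?pi_gt0 // lnXn ?expR_gt0 // !expRK.
  rewrite lnV ?posrE // /ln_joint_const -(mulr_natl (- lam2 / (2 * s))).
  ring.
all: by rewrite ?expR_gt0 ?pi_gt0.
Qed.

Lemma cvg_rescaled_ln_joint : 0 <= lam2 ->
  (- 2 * s * ln (joint lam2 rho2 s X Z A)) @[s --> (0 : R)^'+]
    --> sq_err X Z A + K%:R * lam2.
Proof.
move=> lam0.
pose nd : R := (N * D)%:R.
pose c := nd * ln (2 * pi) - 2 * ln_joint_const.
pose mass s := \sum_(n < N) expR (- lam2 / (2 * s)) / (n.+1)%:R.
have mass_bounds : \forall s \near (0 : R)^'+, 0 <= mass s <= N%:R.
  near=> s; have s0 : 0 < s by near: s; exact: nbhs_right_gt.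
  rewrite harmonic_mass_bounds // expR_ge0 expR_le1 mulNr oppr_le0.
  by rewrite divr_ge0 // ltW // mulr_gt0.
have expansion : \forall s \near (0 : R)^'+,
    sq_err X Z A + K%:R * lam2 + (s * c + nd * (s * ln s) + 2 * (s * mass s))
    = - 2 * s * ln (joint lam2 rho2 s X Z A).
  near=> s; have s0 : 0 < s by near: s; exact: nbhs_right_gt.
  rewrite ln_joint // lnM ?posrE ?mulr_gt0 ?pi_gt0 //.
  by rewrite /c /mass /nd; field; rewrite gt_eqF.
rewrite -[X in _ --> X]addr0; apply: cvg_trans (near_eq_cvg expansion) _.
apply: cvgD; first exact: cvg_cst.
rewrite -[X in _ --> X](_ : 0 * c + nd * 0 + 2 * 0 = 0); last first.
  by rewrite mul0r !mulr0 !addr0.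
apply: cvgD; first apply: cvgD.
- exact: cvgMr_tmp (@cvg_at_right0_id R).
- exact: cvgMl_tmp (@cvg_at_right0_mul_ln R).
- exact: cvgMl_tmp (cvg_at_right0_mul_bounded mass_bounds).
Unshelve. all: by end_near.
Qed.

End JointLogDensity.

Theorem mainTheorem3 (R : realType) (N D : nat) (hN : (0 < N)%N) (hD : (0 < D)%N)
    (X : 'M[R]_(N, D)) (lam2 rho2 : R) (hlam : 0 < lam2) (hrho : 0 < rho2)
    (K : nat) (Z : 'M[bool]_(N, K)) (hZ : feature_allocation Z) (A : 'M[R]_(K, D))
    (hnz : sq_err X Z A + K%:R * lam2 != 0) :
  (- 2 * s2 * ln (joint lam2 rho2 s2 X Z A)) / (sq_err X Z A + K%:R * lam2)
    @[s2 --> (0 : R)^'+] --> (1 : R).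
Proof.
rewrite -[X in _ --> X](mulfV hnz); apply: cvgMr_tmp.
exact: cvg_rescaled_ln_joint hZ hrho (ltW hlam).
Qed.
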